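(* Let $\mathcal{F}$ be a set of predictors, let $\mathcal{Z}$ be a finite nonempty set of groups, and let $\mathcal{L}:\mathcal{F}\to\mathbb{R}$ and $\overline{\mathcal{L}}_z:\mathcal{F}\to\mathbb{R}$ ($z\in\mathcal{Z}$) be given functionals. For $\lambda\in[0,1]$ define $$J_\lambda(f) = (1-\lambda)\,\mathcal{L}(f) + \lambda \max_{z\in\mathcal{Z}} \overline{\mathcal{L}}_z(f).$$ Let $1\ge \overline{\lambda} > \underline{\lambda} > 0$, and let $\overline{f}\in\mathcal{F}$ minimize $J_{\overline{\lambda}}$ over $\mathcal{F}$ and $\underline{f}\in\mathcal{F}$ minimize $J_{\underline{\lambda}}$ over $\mathcal{F}$. Then $$\max_{z\in\mathcal{Z}} \overline{\mathcal{L}}_z(\overline{f}) - \mathcal{L}(\overline{f}) \;\le\; \max_{z\in\mathcal{Z}} \overline{\mathcal{L}}_z(\underline{f}) - \mathcal{L}(\underline{f}).$$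
   Context: This is the min-max fairness objective: $\mathcal{L}(f)$ is the overall (average over all samples) loss of predictor $f$ on a dataset and $\overline{\mathcal{L}}_z(f)$ is the loss of $f$ restricted to group $z$. Minimizing $J_\lambda$ is equivalent to the constrained problem $\min_{f,\epsilon} (1-\lambda)\mathcal{L}(f)+\lambda\epsilon$ subject to $\overline{\mathcal{L}}_z(f)\le\epsilon$ for all $z\in\mathcal{Z}$. The quantity $\max_z \overline{\mathcal{L}}_z(f)-\mathcal{L}(f)$ is the gap between the worst group-wise loss and the overall loss. *)

From mathcomp Require Import all_boot all_order all_algebra.
Set Implicit Arguments. Unset Strict Implicit. Unset Printing Implicit Defensive.
Import Order.TTheory GRing.Theory Num.Theory.
Local Open Scope ring_scope.

(* max over a nonempty finite set of groups Z (z0 witnesses nonemptiness);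
   the initial value Lz z0 f is one of the terms, so this is the true maximum. *)
Definition maxgroup (R : realFieldType) (F : Type) (Z : finType) (z0 : Z)
  (Lz : Z -> F -> R) (f : F) : R :=
  \big[Num.max/Lz z0 f]_(z : Z) Lz z f.

Definition J (R : realFieldType) (F : Type) (Z : finType) (z0 : Z)
  (L : F -> R) (Lz : Z -> F -> R) (lam : R) (f : F) : R :=
  (1 - lam) * L f + lam * maxgroup z0 Lz f.

From mathcomp Require Import all_boot all_order all_algebra.
From mathcomp Require Import ring lra.
Import Order.TTheory GRing.Theory Num.Theory.
Local Open Scope ring_scope.

(* J_lam is affine in lam with slope the gap max_z Lz - L.  For any objective
   A + lam * B, adding the two optimality inequalities of minimizers at
   lamlo < lamhi gives (lamhi - lamlo) (B fhi - B flo) <= 0, so the slope B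
   is nonincreasing along the minimizers. *)

Lemma J_affine (R : realFieldType) (F : Type) (Z : finType) (z0 : Z)
  (L : F -> R) (Lz : Z -> F -> R) (lam : R) (f : F) :
  J z0 L Lz lam f = L f + lam * (maxgroup z0 Lz f - L f).
Proof. by rewrite /J; ring. Qed.

Lemma argmin_slope_antimonotone (R : realFieldType) (F : Type)
  (A B : F -> R) (lamhi lamlo : R) (fhi flo : F) :
  lamlo < lamhi ->
  A fhi + lamhi * B fhi <= A flo + lamhi * B flo ->
  A flo + lamlo * B flo <= A fhi + lamlo * B fhi ->
  B fhi <= B flo.
Proof.
move=> lt_lam opt_hi opt_lo.
have gap_pos : 0 < lamhi - lamlo by rewrite subr_gt0.
rewrite -(ler_pM2l gap_pos).
have -> : (lamhi - lamlo) * B fhi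
  = (A fhi + lamhi * B fhi) - (A fhi + lamlo * B fhi) by ring.
have -> : (lamhi - lamlo) * B flo
  = (A flo + lamhi * B flo) - (A flo + lamlo * B flo) by ring.
lra.
Qed.

Theorem theorem2 (R : realFieldType) (F : Type) (Z : finType) (z0 : Z)
  (L : F -> R) (Lz : Z -> F -> R) (lamhi lamlo : R) (fhi flo : F) :
  lamhi <= 1 -> lamlo < lamhi -> 0 < lamlo ->
  (forall f : F, J z0 L Lz lamhi fhi <= J z0 L Lz lamhi f) ->
  (forall f : F, J z0 L Lz lamlo flo <= J z0 L Lz lamlo f) ->
  maxgroup z0 Lz fhi - L fhi <= maxgroup z0 Lz flo - L flo.
Proof.
move=> _ lt_lam _ min_hi min_lo.
pose gap f := maxgroup z0 Lz f - L f.
apply: (@argmin_slope_antimonotone R F L gap _ _ _ _ lt_lam).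
- by rewrite -!J_affine; exact: min_hi.
- by rewrite -!J_affine; exact: min_lo.
Qed.
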